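(* Let $S$ be a simple $(l,r)$-framed algebra, $\lambda^1,\lambda^2\in\mathrm{IS}^{(l,r)}$, $a_1\in S_{\lambda^1}$, $a_2\in S_{\lambda^2}$. If $a_1\cdot a_2=0$, then $a_1=0$ or $a_2=0$.
   Context: Let $\mathrm{IS}=\{0,\frac12,\frac1{16}\}$ with fusion rule $\star$ (values are subsets): $0\star h=h\star0=\{h\}$, $\frac12\star\frac12=\{0\}$, $\frac12\star\frac1{16}=\frac1{16}\star\frac12=\{\frac1{16}\}$, $\frac1{16}\star\frac1{16}=\{0,\frac12\}$; $A(h_0,h_1,h_2,h_3)=\{h: h\in h_2\star h_3,\ h_0\in h_1\star h\}$. For $h\in A(h_0,h_1,h_2,h_3)$, $h'\in A(h_0,h_2,h_1,h_3)$ define $B^{h,h'}_{h_0,h_1,h_2,h_3}$: $B_{*,0,*,*}=B_{*,*,0,*}=1$; $B_{*,\frac12,\frac12,*}=-1$; $B_{a,\frac12,\frac1{16},a'}=B_{a,\frac1{16},\frac12,a'}=i$ if $a$ or $a'$ is $\frac12$, else $-i$; $B^{b,b'}_{a,\frac1{16},\frac1{16},a'}=e^{-\pi i/8}\cdot\{1$ if $a,a'\ne\frac1{16},a=a'$; $i$ if $a,a'\neq\frac1{16},a\ne a'$; $\frac{1+i}2$ if $a=a'=\frac1{16},b=b'$; $\frac{1-i}2$ if $a=a'=\frac1{16},b\neq b'\}$. $\mathrm{IS}^{(l,r)}=\mathrm{IS}^l\times\mathrm{IS}^r$, $\lambda=(h_1,..,h_l,\bar h_1,..,\bar h_r)$,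 $s(\lambda)=\sum h_i-\sum\bar h_j$; $\star$, $A$ componentwise; $B^{\lambda,\lambda'}_{\lambda^0,\dots,\lambda^3}=\prod_{i\le l}B^{h_i,h'_i}_{h^0_i,\dots,h^3_i}\prod_{j\le r}\overline{B^{\bar h_j,\bar h'_j}_{\bar h^0_j,\dots,\bar h^3_j}}$. An $(l,r)$-framed algebra: finite-dimensional $\mathrm{IS}^{(l,r)}$-graded $S=\bigoplus S_\lambda$ over $\mathbb{C}$ with bilinear product, nonzero $1\in S_0$, $a\cdot_\lambda b$ the $S_\lambda$-component of $a\cdot b$, satisfying (FA1) $S_\lambda=0$ unless $s(\lambda)\in\mathbb{Z}$; (FA2) $S_0=\mathbb{C}1$, $1$ a two-sided unit; (FA3) $S_{\lambda^1}\cdot S_{\lambda^2}\subset\bigoplus_{\lambda\in\lambda^1\star\lambda^2}S_\lambda$; (FA4) $a_2\cdot_{\lambda^0}(a_1\cdot_{\lambda'}a_3)=\sum_{\lambda\in A(\lambda^0,\lambda^1,\lambda^2,\lambda^3)}B^{\lambda,\lambda'}_{\lambda^0,\lambda^1,\lambda^2,\lambda^3}a_1\cdot_{\lambda^0}(a_2\cdot_\lambda a_3)$ for $a_i\in S_{\lambda^i}$, $\lambda'\in A(\lambda^0,\lambda^2,\lambda^1,\lambda^3)$. An ideal is a graded subspace $M$ with $S\cdot M\subset M$; $S$ is simple if its only ideals are $0$ and $S$. *)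

From HB Require Import structures.
From mathcomp Require Import all_boot all_order all_algebra.
From mathcomp Require Import complex.
From mathcomp Require Import reals trigo.

Set Implicit Arguments.
Unset Strict Implicit.
Unset Printing Implicit Defensive.

Import Order.TTheory GRing.Theory Num.Theory.
Local Open Scope ring_scope.

Inductive IS := IS0 | IShalf | IS16.

Definition IS_eqb (a b : IS) : bool :=
  match a, b with
  | IS0, IS0 | IShalf, IShalf | IS16, IS16 => true
  | _, _ => false
  end.
Lemma IS_eqP : Equality.axiom IS_eqb.
Proof. by case; case; constructor. Qed.
HB.instance Definition _ := hasDecEq.Build IS IS_eqP.

Definition IS_code (h : IS) : nat :=
  match h with IS0 => 0 | IShalf => 1 | IS16 => 2 end.
Definition IS_decode (i : nat) : IS :=
  match i with 0 => IS0 | 1 => IShalf | _ => IS16 end.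
Lemma IS_codeK : cancel IS_code IS_decode.
Proof. by case. Qed.
HB.instance Definition _ := Countable.copy IS (can_type IS_codeK).
Definition IS_enum := [:: IS0; IShalf; IS16].
Lemma IS_enumP : Finite.axiom IS_enum. Proof. by case. Qed.
HB.instance Definition _ := isFinite.Build IS IS_enumP.

Definition weight (h : IS) : rat :=
  match h with IS0 => 0 | IShalf => 1 / 2 | IS16 => 1 / 16 end.

(* fusion rule: [fusIS h1 h2 h] <=> h \in h1 * h2 *)
Definition fusIS (h1 h2 h : IS) : bool :=
  match h1, h2 with
  | IS0, _ => h == h2
  | _, IS0 => h == h1
  | IShalf, IShalf => h == IS0
  | IShalf, IS16 | IS16, IShalf => h == IS16
  | IS16, IS16 => (h == IS0) || (h == IShalf)
  end.

Definition AIS (h0 h1 h2 h3 h : IS) : bool := fusIS h2 h3 h && fusIS h1 h h0.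

Section Bcoef.
Variable R : realType.
Local Open Scope complex_scope.

Definition iC : R[i] := 'i.
(* e^{-pi i/8} = cos(pi/8) - i sin(pi/8) *)
Definition zeta : R[i] := (cos (pi / 8%:R)) -i* (sin (pi / 8%:R)).

(* [BIS h0 h1 h2 h3 h h'] = B^{h,h'}_{h0,h1,h2,h3}; the value in cases
   not covered by the definition is irrelevant (such (h,h') never occur). *)
Definition BIS (h0 h1 h2 h3 h h' : IS) : R[i] :=
  match h1, h2 with
  | IS0, _ | _, IS0 => 1
  | IShalf, IShalf => -1
  | IShalf, IS16 | IS16, IShalf =>
      if (h0 == IShalf) || (h3 == IShalf) then iC else - iC
  | IS16, IS16 =>
      if (h0 != IS16) && (h3 != IS16) then
        (if h0 == h3 then zeta else zeta * iC)
      else if (h0 == IS16) && (h3 == IS16) then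
        (if h == h' then zeta * ((1 + iC) / 2%:R) else zeta * ((1 - iC) / 2%:R))
      else 0
  end.
End Bcoef.

Definition Lam (l r : nat) : finType := ({ffun 'I_l -> IS} * {ffun 'I_r -> IS})%type.

Definition lam0 (l r : nat) : Lam l r := ([ffun => IS0], [ffun => IS0]).

Definition slam l r (lam : Lam l r) : rat :=
  \sum_(i < l) weight (lam.1 i) - \sum_(j < r) weight (lam.2 j).

Definition fusL l r (lam1 lam2 lam : Lam l r) : bool :=
  [forall i, fusIS (lam1.1 i) (lam2.1 i) (lam.1 i)] &&
  [forall j, fusIS (lam1.2 j) (lam2.2 j) (lam.2 j)].

Definition AL l r (lam0 lam1 lam2 lam3 lam : Lam l r) : bool :=
  fusL lam2 lam3 lam && fusL lam1 lam lam0.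

Definition BL (R : realType) l r (lam0 lam1 lam2 lam3 lam lam' : Lam l r) : R[i] :=
  (\prod_(i < l) BIS R (lam0.1 i) (lam1.1 i) (lam2.1 i) (lam3.1 i) (lam.1 i) (lam'.1 i)) *
  (\prod_(j < r) conjc (BIS R (lam0.2 j) (lam1.2 j) (lam2.2 j) (lam3.2 j) (lam.2 j) (lam'.2 j))).

Section Framed.
Variables (R : realType) (l r : nat) (V : vectType R[i]).
Variables (S : Lam l r -> {vspace V}) (mul : V -> V -> V) (one : V).

Definition comp (lam : Lam l r) (v : V) : V :=
  sumv_pi (\sum_(mu : Lam l r) S mu)%VS lam v.

Record framed_algebra : Prop := {
  fa_direct : directv (\sum_(mu : Lam l r) S mu);
  fa_full : (\sum_(mu : Lam l r) S mu)%VS = fullv;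
  fa_linl : forall b, linear (mul^~ b);
  fa_linr : forall a, linear (mul a);
  fa1 : forall lam, ~~ (slam lam \is a Num.int) -> S lam = 0%VS;
  fa2_one_nz : one != 0;
  fa2_S0 : S (lam0 l r) = <[one]>%VS;
  fa2_unitl : forall a, mul one a = a;
  fa2_unitr : forall a, mul a one = a;
  fa3 : forall lam1 lam2 a1 a2, a1 \in S lam1 -> a2 \in S lam2 ->
        mul a1 a2 \in (\sum_(lam | fusL lam1 lam2 lam) S lam)%VS;
  fa4 : forall lam0 lam1 lam2 lam3 lam' a1 a2 a3,
        a1 \in S lam1 -> a2 \in S lam2 -> a3 \in S lam3 ->
        AL lam0 lam2 lam1 lam3 lam' ->
        comp lam0 (mul a2 (comp lam' (mul a1 a3))) =
        \sum_(lam | AL lam0 lam1 lam2 lam3 lam)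
           BL R lam0 lam1 lam2 lam3 lam lam' *: comp lam0 (mul a1 (comp lam (mul a2 a3)))
}.

Definition graded_subspace (M : {vspace V}) : Prop :=
  M = (\sum_(lam : Lam l r) (M :&: S lam))%VS.

Definition fa_ideal (M : {vspace V}) : Prop :=
  graded_subspace M /\ forall a m, m \in M -> mul a m \in M.

Definition fa_simple : Prop :=
  forall M, fa_ideal M -> M = 0%VS \/ M = fullv.
End Framed.

(* For homogeneous a, the homogeneous x with a x = 0 span a graded subspace N.
   Associativity (FA4), read with a in the middle slot, writes the components
   of a (b x) as combinations of components of b (a x), so N is a left ideal.
   By simplicity N is 0, which kills every homogeneous x with a x = 0, or N is
   everything, which kills a = a 1. *)

From Pilot Require Import Defs.
From HB Require Import structures.
From mathcomp Require Import all_boot all_order all_algebra.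
From mathcomp Require Import complex.
From mathcomp Require Import reals trigo.
Import GRing.Theory.
Local Open Scope ring_scope.

Section GradedVspace.
Context {K : fieldType} {V : vectType K} {I : finType}.
Variable S : I -> {vspace V}.

Definition graded_part (M : {vspace V}) : {vspace V} :=
  (\sum_(i : I) (M :&: S i))%VS.

Lemma graded_part_sub (M : {vspace V}) : (graded_part M <= M)%VS.
Proof. by apply/subv_sumP => i _; exact: capvSl. Qed.

Lemma mem_graded_part {M : {vspace V}} {i v} :
  v \in S i -> v \in M -> v \in graded_part M.
Proof.
move=> vS vM; apply: (subvP (sumv_sup i _ (subvv (M :&: S i)))) => //.
by rewrite memv_cap vM vS.
Qed.

Lemma graded_partK (M : {vspace V}) : graded_part (graded_part M) = graded_part M.
Proof.
apply/esym/eqP; rewrite eqEsubv; apply/andP; split; apply/subv_sumP => i _.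
  by apply: (sumv_sup i) => //; rewrite subv_cap capvSr (sumv_sup i).
exact: capvSl.
Qed.

End GradedVspace.

Section FramedAlgebra.
Context {R : realType} {l r : nat} {V : vectType R[i]}.
Context {S : Lam l r -> {vspace V}} {mul : V -> V -> V} {one : V}.
Hypothesis SA : framed_algebra S mul one.

Definition mul_left (a : V) : {linear V -> V} :=
  HB.pack (mul a) (GRing.isLinear.Build _ _ _ _ (mul a) (fa_linr SA a)).
Definition mul_right (b : V) : {linear V -> V} :=
  HB.pack (mul^~ b) (GRing.isLinear.Build _ _ _ _ (mul^~ b) (fa_linl SA b)).

Lemma mulv0 a : mul a 0 = 0.
Proof. exact: (linear0 (mul_left a)). Qed.

Lemma mul_suml (J : Type) (s : seq J) (P : pred J) (F : J -> V) b :
  mul (\sum_(j <- s | P j) F j) b = \sum_(j <- s | P j) mul (F j) b.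
Proof. exact: (linear_sum (mul_right b)). Qed.

Lemma mul_sumr (J : Type) (s : seq J) (P : pred J) (F : J -> V) a :
  mul a (\sum_(j <- s | P j) F j) = \sum_(j <- s | P j) mul a (F j).
Proof. exact: (linear_sum (mul_left a)). Qed.

Lemma comp0 lam : Defs.comp S lam 0 = 0.
Proof. exact: linear0. Qed.

Lemma comp_mem lam v : Defs.comp S lam v \in S lam.
Proof. exact: memv_sum_pi. Qed.

Lemma sum_comp v : \sum_mu Defs.comp S mu v = v.
Proof. by apply: sumv_pi_sum; rewrite (fa_full SA) memvf. Qed.

Lemma comp_sum_homogeneous (u : Lam l r -> V) mu :
  (forall lam, u lam \in S lam) -> Defs.comp S mu (\sum_lam u lam) = u mu.
Proof.
move=> uS.
have := directv_sum_unique (fa_direct SA) _ u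
  (fun lam _ => comp_mem lam (\sum_mu u mu)) (fun lam _ => uS lam).
by rewrite sum_comp eqxx => /esym /forall_inP /(_ mu isT) /eqP.
Qed.

Lemma comp_outside (P : pred (Lam l r)) v lam :
  v \in (\sum_(mu | P mu) S mu)%VS -> ~~ P lam -> Defs.comp S lam v = 0.
Proof.
move=> /memv_sumP [vs vsS ->] nPlam; rewrite big_mkcond /=.
rewrite (comp_sum_homogeneous (fun mu => if P mu then vs mu else 0)).
  by rewrite (negPf nPlam).
by move=> mu; case: ifP => [/vsS | _]; rewrite ?mem0v.
Qed.

Lemma comp_mul_notin_fus {lam1 lam2 lam a1 a2} :
  a1 \in S lam1 -> a2 \in S lam2 -> ~~ fusL lam1 lam2 lam ->
  Defs.comp S lam (mul a1 a2) = 0.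
Proof. by move=> a1S a2S; apply: comp_outside; exact: (fa3 SA). Qed.

Lemma mul_comp_mul_annihilated {lam nu mu} lam' {a b x} :
  a \in S lam -> b \in S nu -> x \in S mu -> mul a x = 0 ->
  mul a (Defs.comp S lam' (mul b x)) = 0.
Proof.
move=> aS bS xS ax0; rewrite -[LHS]sum_comp; apply: big1 => lam0 _.
have [A | nA] := boolP (AL lam0 lam nu mu lam').
  rewrite (fa4 SA bS aS xS A); apply: big1 => lam'' _.
  by rewrite ax0 comp0 mulv0 comp0 scaler0.
have [F | nF] := boolP (fusL nu mu lam').
  by apply: comp_mul_notin_fus aS (comp_mem _ _) _; rewrite /AL F in nA.
by rewrite (comp_mul_notin_fus bS xS nF) mulv0 comp0.
Qed.

Definition rann (a : V) : {vspace V} := lker (linfun (mul_left a)).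

Lemma mem_rann a v : (v \in rann a) = (mul a v == 0).
Proof. by rewrite memv_ker lfunE. Qed.

Lemma graded_rann_ideal {lam a} :
  a \in S lam -> fa_ideal S mul (graded_part S (rann a)).
Proof.
move=> aS; split; first exact/esym/graded_partK.
move=> b m /memv_sumP [ms msM ->].
rewrite -(sum_comp b) mul_suml; apply: rpred_sum => nu _.
rewrite mul_sumr; apply: rpred_sum => mu _.
have /memv_capP [m_ann mS] := msM mu isT.
rewrite -[mul _ _]sum_comp; apply: rpred_sum => lam' _.
apply: (mem_graded_part S (comp_mem _ _)); rewrite mem_rann.
apply/eqP; apply: (mul_comp_mul_annihilated _ aS (comp_mem nu b) mS).
by apply/eqP; rewrite -mem_rann.
Qed.

End FramedAlgebra.

Theorem mainTheorem4 (R : realType) (l r : nat) (V : vectType R[i])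
    (S : Lam l r -> {vspace V}) (mul : V -> V -> V) (one : V) :
  framed_algebra S mul one -> fa_simple S mul ->
  forall (lam1 lam2 : Lam l r) (a1 a2 : V),
    a1 \in S lam1 -> a2 \in S lam2 -> mul a1 a2 = 0 ->
    a1 = 0 \/ a2 = 0.
Proof.
move=> SA simpleS lam1 lam2 a1 a2 a1S a2S a1a2.
have a2_ann : a2 \in graded_part S (rann SA a1).
  by apply: (mem_graded_part S a2S); rewrite mem_rann a1a2.
case: (simpleS _ (graded_rann_ideal SA a1S)) => [N0 | Nfull].
  by right; apply/eqP; rewrite -memv0 -N0.
left; have : one \in rann SA a1.
  by apply: (subvP (graded_part_sub S _)); rewrite Nfull memvf.
by rewrite mem_rann (fa2_unitr SA) => /eqP.
Qed.
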